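(* With $Y_i$, $D_i$ and $T_{in}^{-1}$ as described in the context, for $1\le i<n$, $$[D_i,x_n^{-1}]=t^{2n-i-1}(t^{-1}-1)\,x_i^{-1}\,x_n^{-1}\,T_{in}^{-1}\,Y_i,$$ where $x_n^{-1}$ denotes the operator of multiplication by $x_n^{-1}$.
   Context: Let $n\ge2$, let $q,t$ be generic parameters, and let operators act on Laurent polynomials in $x=(x_1,\dots,x_n)$ with coefficients in $\mathbb{Q}(q,t)$. Let $s_i$ interchange $x_i,x_{i+1}$, and $(\tau_if)(x)=f(x_1,\dots,qx_i,\dots,x_n)$. Let $T_i=t+\frac{tx_i-x_{i+1}}{x_i-x_{i+1}}(s_i-1)$, $1\le i\le n-1$ (invertible, $T_i^{-1}=t^{-1}-1+t^{-1}T_i$). Let $\omega=s_{n-1}\cdots s_1\tau_1$ and $Y_i=t^{-n+i}T_i\cdots T_{n-1}\,\omega\,T_1^{-1}\cdots T_{i-1}^{-1}$. For $i<j$ let $T_{ij}^{-1}=T_i^{-1}\cdots T_{j-2}^{-1}T_{j-1}^{-1}T_{j-2}^{-1}\cdots T_i^{-1}$. The $q$-Dunkl operators are $D_i=x_i^{-1}\bigl(1-t^{n-1}[1+(t^{-1}-1)\sum_{j=i+1}^n t^{j-i}T_{ij}^{-1}]Y_i\bigr)$. *)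

(* Laurent polynomials in x_1..x_n over Q(q,t), realised inside
   the field of rational functions {fraction {mpoly F[n]}}, F = Q(q,t). *)
From HB Require Import structures.
From mathcomp Require Import all_boot all_order all_algebra.
From mathcomp Require Import mpoly fraction generic_quotient.
Notation "x %:F" := (@FracField.tofrac _ x) (format "x %:F").
Set Implicit Arguments. Unset Strict Implicit. Unset Printing Implicit Defensive.
Import Order.TTheory GRing.Theory Num.Theory.
Local Open Scope ring_scope.

Definition F : fieldType := {fraction {mpoly rat[2]}}.
Definition qq : F := ('X_(@Ordinal 2 0 isT) : {mpoly rat[2]})%:F.
Definition tt : F := ('X_(@Ordinal 2 1 isT) : {mpoly rat[2]})%:F.

Section Operators.
Variable n : nat.

Definition Pol := {mpoly F[n]}.
Definition L : fieldType := {fraction Pol}.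

(* the variable x_k, 1-based (x_k := 0 if k is out of range, never used) *)
Definition xv (k : nat) : Pol :=
  if @insub nat (fun j => j < n)%N _ k.-1 is Some j then 'X_j else 0.

Definition laurent (f : L) : Prop :=
  exists (p : Pol) (m : 'X_{1..n}), f = p%:F / ('X_[m] : Pol)%:F.

Definition swap_idx (i k : nat) : nat :=
  if k == i then i.+1 else if k == i.+1 then i else k.

Definition sP (i : nat) (p : Pol) : Pol :=
  comp_mpoly [tuple xv (swap_idx i j.+1) | j < n] p.
Definition tauP (i : nat) (p : Pol) : Pol :=
  comp_mpoly [tuple (if j.+1 == i then qq%:MP * 'X_j else 'X_j) | j < n] p.

Definition liftF (phi : Pol -> Pol) (f : L) : L :=
  (phi \n_(repr f))%:F / (phi \d_(repr f))%:F.

Definition op := L -> L.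
Definition opprod (l : seq op) : op := foldr (fun g h => g \o h) id l.

Definition X (k : nat) : L := (xv k)%:F.
Definition sc (c : F) : L := ((c%:MP : Pol))%:F.

Definition s (i : nat) : op := liftF (sP i).
Definition tau (i : nat) : op := liftF (tauP i).

Definition T (i : nat) : op := fun f =>
  sc tt * f + (sc tt * X i - X i.+1) / (X i - X i.+1) * (s i f - f).
Definition Tinv (i : nat) : op := fun f =>
  sc (tt^-1 - 1) * f + sc tt^-1 * T i f.

(* omega = s_{n-1} ... s_1 tau_1 *)
Definition omega : op := opprod (rev (map s (iota 1 n.-1)) ++ [:: tau 1]).

(* Y_i = t^{-n+i} T_i ... T_{n-1} omega T_1^{-1} ... T_{i-1}^{-1} *)
Definition Y (i : nat) : op := fun f =>
  sc (tt ^- (n - i)) *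
  opprod (map T (iota i (n - i)) ++ omega :: map Tinv (iota 1 i.-1)) f.

(* T_{ij}^{-1} = T_i^{-1} ... T_{j-2}^{-1} T_{j-1}^{-1} T_{j-2}^{-1} ... T_i^{-1} *)
Definition Tij_inv (i j : nat) : op :=
  opprod (map Tinv (iota i (j.-1 - i)) ++ Tinv j.-1
            :: rev (map Tinv (iota i (j.-1 - i)))).

Definition D (i : nat) : op := fun f =>
  (X i)^-1 * (f - sc (tt ^+ n.-1) *
     (Y i f + sc (tt^-1 - 1) *
        \sum_(i.+1 <= j < n.+1) sc (tt ^+ (j - i)) * Tij_inv i j (Y i f))).

End Operators.

From HB Require Import structures.
From mathcomp Require Import all_boot all_order all_algebra.
From mathcomp Require Import mpoly fraction generic_quotient.
From mathcomp Require Import ring zify.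
Import GRing.Theory.
Local Open Scope ring_scope.

(* Downward induction on i, driven by Y_i = t^-1 T_i Y_(i+1) T_i and
   T_(ij)^-1 = T_i^-1 T_(i+1,j)^-1 T_i^-1, removes the sum from the Dunkl operator:
     [1 + (t^-1 - 1) sum_j t^(j-i) T_(ij)^-1] Y_i = T_i^-1 ... T_(n-1)^-1 omega T_1^-1 ... T_(i-1)^-1,
   so that D_i = x_i^-1 (1 - t^(n-1) T_i^-1 ... T_(n-1)^-1 omega T_1^-1 ... T_(i-1)^-1).
   In this word x_n^-1 commutes with every T_k^-1 for k < n-1, omega turns it into x_(n-1)^-1,
   and T_(n-1)^-1 x_(n-1)^-1 = t^-1 x_n^-1 T_(n-1) = x_n^-1 (T_(n-1)^-1 - (t^-1 - 1)).
   Hence the commutator with x_n^-1 is (1 - t^-1) x_n^-1 times the word without T_(n-1)^-1,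
   and that shorter word is t^(n-i) T_(in)^-1 Y_i. *)

Section FractionRepr.
Context {R : idomainType}.
Local Open Scope quotient_scope.

Lemma frac_numden (f : {fraction R}) : f = (\n_(repr f))%:F / (\d_(repr f))%:F.
Proof.
have d_neq0 : (\d_(repr f))%:F != 0 :> {fraction R} by rewrite tofrac_eq0 denom_ratioP.
apply: (mulIf d_neq0); rewrite divfK // mulrC.
have tofracE a : a%:F = \pi_{fraction R} (Ratio a 1).
  by rewrite /FracField.tofrac; unlock.
rewrite !tofracE -[f in _ * f]reprK -[_ * _]FracField.pi_mul.
apply/eqmodP; rewrite /= FracField.equivfE /FracField.mulf.
by rewrite !numden_Ratio ?mulf_neq0 ?oner_neq0 ?denom_ratioP // mulr1 mul1r.
Qed.

Lemma fracP (f : {fraction R}) : exists p d, d != 0 /\ f = p%:F / d%:F.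
Proof. exists \n_(repr f), \d_(repr f); split; [exact: denom_ratioP | exact: frac_numden]. Qed.

End FractionRepr.

Section LiftF.
Variables (n : nat) (phi : {rmorphism Pol n -> Pol n}).
(* [liftF] reads an arbitrary representative; injectivity keeps its image denominator
   nonzero, which makes the result independent of that choice. *)
Hypothesis phi_inj : injective phi.

Lemma rmorph_inj_neq0 p : p != 0 -> phi p != 0.
Proof. by rewrite -{2}(rmorph0 phi) (inj_eq phi_inj). Qed.

Lemma liftF_frac p d : d != 0 -> liftF phi (p%:F / d%:F) = (phi p)%:F / (phi d)%:F.
Proof.
move=> d_neq0; rewrite /liftF; set r := repr _.
have r_den_neq0 : \d_r != 0 := denom_ratioP r.
have cross : p * \d_r = \n_r * d.
  apply/eqP; rewrite -tofrac_eq !tofracM -eqr_div ?tofrac_eq0 //.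
  exact/eqP/frac_numden.
apply/eqP; rewrite eqr_div ?tofrac_eq0 ?rmorph_inj_neq0 //.
by rewrite -!tofracM -!rmorphM -cross mulrC.
Qed.

Lemma liftF_tofrac p : liftF phi p%:F = (phi p)%:F.
Proof.
by have := @liftF_frac p 1 (oner_neq0 _); rewrite !rmorph1 !divr1.
Qed.

Lemma liftFD : {morph liftF phi : f g / f + g}.
Proof.
move=> f g; have [p [d [d0 ->]]] := fracP f; have [q [e [e0 ->]]] := fracP g.
rewrite addf_div ?tofrac_eq0 ?rmorph_inj_neq0 // -!tofracM -tofracD.
rewrite !liftF_frac ?mulf_neq0 // addf_div ?tofrac_eq0 ?rmorph_inj_neq0 //.
by rewrite -!tofracM -tofracD rmorphD !rmorphM.
Qed.

Lemma liftFN : {morph liftF phi : f / - f}.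
Proof.
move=> f; have [p [d [d0 ->]]] := fracP f.
by rewrite -mulNr -tofracN !liftF_frac // rmorphN tofracN mulNr.
Qed.

Lemma liftFB : {morph liftF phi : f g / f - g}.
Proof. by move=> f g; rewrite liftFD liftFN. Qed.

Lemma liftFM : {morph liftF phi : f g / f * g}.
Proof.
move=> f g; have [p [d [d0 ->]]] := fracP f; have [q [e [e0 ->]]] := fracP g.
rewrite mulf_div -!tofracM !liftF_frac ?mulf_neq0 //.
by rewrite mulf_div -!tofracM !rmorphM.
Qed.

Lemma liftFV : {morph liftF phi : f / f^-1}.
Proof.
move=> f; have [p [d [d0 ->]]] := fracP f.
have [->|p0] := eqVneq p 0; last by rewrite invf_div !liftF_frac // invf_div.
have liftF0 : liftF phi 0 = 0 by have := liftF_tofrac 0; rewrite !rmorph0.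
by rewrite rmorph0 mul0r invr0 liftF0 invr0.
Qed.

Lemma liftF_invol : involutive phi -> involutive (liftF phi).
Proof.
move=> phiK f; have [p [d [d0 ->]]] := fracP f.
by rewrite !liftF_frac ?rmorph_inj_neq0 // !phiK.
Qed.

End LiftF.

Lemma comp_mpoly_comp (R : comNzRingType) (n k m : nat)
    (lq : k.-tuple {mpoly R[m]}) (lr : n.-tuple {mpoly R[k]}) (p : {mpoly R[n]}) :
  comp_mpoly lq (comp_mpoly lr p) = comp_mpoly [tuple comp_mpoly lq (tnth lr i) | i < n] p.
Proof.
elim/mpolyind: p => [|c m' p _ _ IH]; first by rewrite !comp_mpoly0.
rewrite !comp_mpolyD IH !comp_mpolyZ !comp_mpolyX rmorph_prod.
congr (_ *: _ + _); apply: eq_bigr => i _; by rewrite rmorphXn tnth_mktuple.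
Qed.

Lemma iota_rcons m k : iota m k.+1 = rcons (iota m k) (m + k).
Proof. by rewrite -addn1 iotaD cats1. Qed.

(* [T k f] unfolds to [demazure_lusztig (sc n tt) (X n k) (X n k.+1) f (s k f)]. *)
Definition demazure_lusztig {K : fieldType} (t x y a b : K) :=
  t * a + (t * x - y) / (x - y) * (b - a).

Section DemazureLusztig.
Context {K : fieldType} {t x y : K}.
Hypotheses (t_neq0 : t != 0) (x_neq_y : x != y).

Lemma demazure_lusztigK a b :
  (t^-1 - 1) * demazure_lusztig t x y a b
    + t^-1 * demazure_lusztig t x y (demazure_lusztig t x y a b)
                                    (demazure_lusztig t y x b a) = a.
Proof.
have y_neq_x : y - x != 0 by rewrite subr_eq0 eq_sym.
rewrite /demazure_lusztig; field.
by rewrite t_neq0 subr_eq0 x_neq_y y_neq_x.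
Qed.

Lemma demazure_lusztig_Vscale a b : x != 0 -> y != 0 ->
  (t^-1 - 1) * (x^-1 * a) + t^-1 * demazure_lusztig t x y (x^-1 * a) (y^-1 * b)
    = t^-1 * y^-1 * demazure_lusztig t x y a b.
Proof.
move=> x_neq0 y_neq0; rewrite /demazure_lusztig; field.
by rewrite t_neq0 x_neq0 y_neq0 subr_eq0 x_neq_y.
Qed.

End DemazureLusztig.

HB.instance Definition _ (n : nat) :=
  GRing.RMorphism.copy (sc n) (@FracField.tofrac (Pol n) \o @mpolyC n F).
HB.instance Definition _ (n k : nat) :=
  GRing.RMorphism.copy (@sP n k) (comp_mpoly [tuple xv n (swap_idx k j.+1) | j < n]).
HB.instance Definition _ (n k : nat) :=
  GRing.RMorphism.copy (@tauP n k)
    (comp_mpoly [tuple (if j.+1 == k then qq%:MP * 'X_j else 'X_j) | j < n]).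

Lemma mpolyX_neq0 (R : nzRingType) n (j : 'I_n) : ('X_j : {mpoly R[n]}) != 0.
Proof.
apply/eqP => /(congr1 (mcoeff U_(j))).
by rewrite mcoeffXU eqxx mcoeff0; apply/eqP; rewrite oner_eq0.
Qed.

Lemma mpolyX_inj (R : nzRingType) n : injective (fun j : 'I_n => 'X_j : {mpoly R[n]}).
Proof.
move=> i j /(congr1 (mcoeff U_(j))); rewrite !mcoeffXU eqxx.
by case: eqP => // _ /eqP; rewrite eq_sym oner_eq0.
Qed.

Lemma qq_neq0 : qq != 0.
Proof. by rewrite tofrac_eq0 mpolyX_neq0. Qed.

Lemma tt_neq0 : tt != 0.
Proof. by rewrite tofrac_eq0 mpolyX_neq0. Qed.

Section SwapTau.
Context {n : nat}.

Lemma xvE {k} (k_lt : (k.-1 < n)%N) : (0 < k)%N -> xv n k = 'X_(Ordinal k_lt).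
Proof. by move=> k_gt0; rewrite /xv insubT; congr 'X_ _; apply: val_inj. Qed.

Lemma swap_idxK k : involutive (swap_idx k).
Proof. by move=> m; rewrite /swap_idx; do ! case: eqP => /=; lia. Qed.

Lemma sP_xv k m : (0 < m <= n)%N -> @sP n k (xv n m) = xv n (swap_idx k m).
Proof.
move=> m_in; have m_lt : (m.-1 < n)%N by lia.
rewrite (xvE m_lt); last by lia.
rewrite /sP comp_mpolyXU -(tnth_nth 0 _ (Ordinal m_lt)) tnth_mktuple /=.
by rewrite prednK //; lia.
Qed.

Lemma sP_invol k : (0 < k < n)%N -> involutive (@sP n k).
Proof.
move=> k_in p; rewrite /sP comp_mpoly_comp -[in RHS](comp_mpoly_id p).
apply: (congr1 (fun lq => comp_mpoly lq p)); apply: eq_from_tnth => j; rewrite !tnth_mktuple.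
have j_in : (0 < swap_idx k j.+1 <= n)%N.
  by have := ltn_ord j; rewrite /swap_idx; do ! case: eqP => /=; lia.
have := @sP_xv k _ j_in; rewrite /sP => ->.
by rewrite swap_idxK (xvE (k := j.+1) (ltn_ord j)) //; congr 'X_ _; apply: val_inj.
Qed.

Lemma tauP_inj : injective (@tauP n 1).
Proof.
pose tauP' := comp_mpoly [tuple (if j.+1 == 1%N then qq^-1%:MP * 'X_j else 'X_j) | j < n].
apply: (can_inj (g := tauP')) => p; rewrite /tauP' /tauP comp_mpoly_comp.
rewrite -[in RHS](comp_mpoly_id p); apply: (congr1 (fun lq => comp_mpoly lq p)).
apply: eq_from_tnth => j; rewrite !tnth_mktuple; case: eqP => [j0|j_ne].
  rewrite rmorphM /= comp_mpolyC comp_mpolyXU -(tnth_nth 0 _ j) tnth_mktuple j0 eqxx.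
  by rewrite mulrA -rmorphM mulfV ?qq_neq0 // mul1r.
by rewrite comp_mpolyXU -(tnth_nth 0 _ j) tnth_mktuple (introF eqP j_ne).
Qed.

Lemma tauP_xv m : (1 < m <= n)%N -> @tauP n 1 (xv n m) = xv n m.
Proof.
move=> m_in; have m_lt : (m.-1 < n)%N by lia.
rewrite (xvE m_lt); last by lia.
rewrite /tauP comp_mpolyXU -(tnth_nth 0 _ (Ordinal m_lt)) tnth_mktuple /=.
by have -> : (m.-1.+1 == 1)%N = false by apply/negbTE/eqP; lia.
Qed.

End SwapTau.

Section HeckeOperators.
Context {n : nat}.
Implicit Types (k m : nat) (f g : L n) (a : F).

Lemma sc_tt_neq0 : sc n tt != 0.
Proof. by rewrite fmorph_eq0 tt_neq0. Qed.

Lemma sc_ttV : sc n tt^-1 = (sc n tt)^-1.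
Proof. exact: fmorphV. Qed.

Lemma sc_ttVB1 : sc n (tt^-1 - 1) = (sc n tt)^-1 - 1.
Proof. by rewrite rmorphB rmorph1 fmorphV. Qed.

Lemma X_neq0 m : (0 < m <= n)%N -> X n m != 0.
Proof.
move=> m_in; have m_lt : (m.-1 < n)%N by lia.
rewrite /X tofrac_eq0 (xvE m_lt); [exact: mpolyX_neq0 | lia].
Qed.

Lemma X_neq k : (0 < k < n)%N -> X n k != X n k.+1.
Proof.
move=> k_in; have k_lt : (k.-1 < n)%N by lia.
have Sk_lt : (k < n)%N by lia.
rewrite /X tofrac_eq (xvE k_lt); last by lia.
rewrite (xvE (k := k.+1) Sk_lt) // (inj_eq (@mpolyX_inj _ _)).
by rewrite -val_eqE /=; lia.
Qed.

Section InnerIndex.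
Variable k : nat.
Hypothesis k_in : (0 < k < n)%N.

Let sP_inj : injective (@sP n k) := can_inj (sP_invol k k_in).

Lemma sD : {morph @s n k : f g / f + g}. Proof. exact: liftFD sP_inj. Qed.
Lemma sB : {morph @s n k : f g / f - g}. Proof. exact: liftFB sP_inj. Qed.
Lemma sM : {morph @s n k : f g / f * g}. Proof. exact: liftFM sP_inj. Qed.
Lemma sV : {morph @s n k : f / f^-1}. Proof. exact: liftFV sP_inj. Qed.
Lemma sK : involutive (@s n k). Proof. exact: liftF_invol sP_inj (sP_invol k k_in). Qed.

Lemma s_sc a : s k (sc n a) = sc n a.
Proof. by rewrite /s /sc liftF_tofrac //; congr _%:F; exact: comp_mpolyC. Qed.

Lemma s_X m : (0 < m <= n)%N -> s k (X n m) = X n (swap_idx k m).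
Proof. by move=> m_in; rewrite /s /X liftF_tofrac //; congr _%:F; exact: sP_xv. Qed.

Lemma s_Xk : s k (X n k) = X n k.+1.
Proof. by rewrite s_X /swap_idx ?eqxx //; lia. Qed.

Lemma s_XSk : s k (X n k.+1) = X n k.
Proof. by rewrite s_X /swap_idx ?(gtn_eqF (ltnSn k)) ?eqxx //; lia. Qed.

Lemma s_Xn : (k.+1 < n)%N -> s k (X n n) = X n n.
Proof.
move=> Sk_lt; have k_lt : (k < n)%N by lia.
by rewrite s_X /swap_idx ?(gtn_eqF k_lt) ?(gtn_eqF Sk_lt) //; lia.
Qed.

(* [ring] would unfold [s] down to representatives of fractions, so operator values
   are generalized before calling it. *)
Lemma TD : {morph @T n k : f g / f + g}.
Proof. by move=> f g; rewrite /T sD; move: (s k f) (s k g) => sf sg; ring. Qed.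

Lemma T_mul_sfixed g f : s k g = g -> T k (g * f) = g * T k f.
Proof. by move=> sg; rewrite /T sM sg; move: (s k f) => sf; ring. Qed.

Lemma TinvD : {morph @Tinv n k : f g / f + g}.
Proof. by move=> f g; rewrite /Tinv TD; move: (T k f) (T k g) => Tf Tg; ring. Qed.

Lemma Tinv0 : Tinv k (0 : L n) = 0.
Proof.
have := TinvD 0 0; rewrite addr0 => /(congr1 (fun x => x - Tinv k 0)).
by rewrite subrr addrK => /esym.
Qed.

Lemma Tinv_mul_sfixed g f : s k g = g -> Tinv k (g * f) = g * Tinv k f.
Proof. by move=> sg; rewrite /Tinv T_mul_sfixed //; move: (T k f) => Tf; ring. Qed.

Lemma s_T f : s k (T k f) =
  sc n tt * s k f + (sc n tt * X n k.+1 - X n k) / (X n k.+1 - X n k) * (f - s k f).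
Proof. by rewrite /T sD !sM sV !sB sM s_sc s_Xk s_XSk sK. Qed.

Lemma TK : cancel (@T n k) (@Tinv n k).
Proof.
move=> f; rewrite /Tinv; set Tf := T k f; rewrite [T k Tf]/T /Tf s_T.
rewrite sc_ttVB1 sc_ttV.
exact: (demazure_lusztigK sc_tt_neq0 (X_neq _ k_in) f (s k f)).
Qed.

Lemma Tinv_Xinv f : Tinv k ((X n k)^-1 * f) = sc n tt^-1 * (X n k.+1)^-1 * T k f.
Proof.
rewrite /Tinv [T k (_ * f)]/T sM sV s_Xk sc_ttVB1 sc_ttV.
apply: (demazure_lusztig_Vscale sc_tt_neq0 (X_neq _ k_in));
  by apply: X_neq0; lia.
Qed.

End InnerIndex.

Lemma tauM : {morph @tau n 1 : f g / f * g}.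
Proof. exact: liftFM tauP_inj. Qed.

Lemma tauV : {morph @tau n 1 : f / f^-1}.
Proof. exact: liftFV tauP_inj. Qed.

Lemma tau_X m : (1 < m <= n)%N -> tau 1 (X n m) = X n m.
Proof. by move=> m_in; rewrite /tau /X liftF_tofrac; [congr _%:F; exact: tauP_xv | exact: tauP_inj]. Qed.

End HeckeOperators.

Arguments opprod : simpl never.

Section Words.
Context {n : nat}.
Implicit Types (i j k : nat) (l : seq nat) (f g h : L n) (a : F).

Lemma opprod_cons (g : op n) (l' : seq (op n)) f : opprod (g :: l') f = g (opprod l' f).
Proof. by []. Qed.

Lemma opprod_seq1 (g : op n) f : opprod [:: g] f = g f.
Proof. by []. Qed.

Lemma opprod_cat (l1 l2 : seq (op n)) f : opprod (l1 ++ l2) f = opprod l1 (opprod l2 f).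
Proof. by elim: l1 => // g l1 IH; rewrite cat_cons !opprod_cons IH. Qed.

Section InnerIndices.
Variable l : seq nat.
Hypothesis l_in : all (fun k => 0 < k < n)%N l.

Lemma TinvsD : {morph opprod (map (@Tinv n) l) : f g / f + g}.
Proof.
elim: l l_in => //= k l' IH /andP[k_in l'_in] f g.
by rewrite !opprod_cons IH // TinvD.
Qed.

Lemma Tinvs_mul_sfixed g f : {in l, forall k, s k g = g} ->
  opprod (map (@Tinv n) l) (g * f) = g * opprod (map (@Tinv n) l) f.
Proof.
elim: l l_in => //= k l' IH /andP[k_in l'_in] sg.
rewrite !opprod_cons IH ?Tinv_mul_sfixed //; first exact/sg/mem_head.
by move=> j j_l'; apply: sg; rewrite inE j_l' orbT.
Qed.

Lemma Tinvs_sc a f : opprod (map (@Tinv n) l) (sc n a * f) = sc n a * opprod (map (@Tinv n) l) f.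
Proof. by apply: Tinvs_mul_sfixed => k /(allP l_in) k_in; apply: s_sc. Qed.

Lemma Ts_cancel f : opprod (rev (map (@Tinv n) l)) (opprod (map (@T n) l) f) = f.
Proof.
elim: l l_in f => //= k l' IH /andP[k_in l'_in] f.
by rewrite rev_cons -cats1 opprod_cat opprod_cons TK // IH.
Qed.

Lemma s_word_M : {morph opprod (map (@s n) l) : f g / f * g}.
Proof. by elim: l l_in => //= k l' IH /andP[k_in l'_in] f g; rewrite !opprod_cons IH // sM. Qed.

Lemma s_word_fixed g : {in l, forall k, s k g = g} -> opprod (map (@s n) l) g = g.
Proof.
elim: l l_in => //= k l' IH /andP[k_in l'_in] sg.
rewrite opprod_cons IH ?sg ?mem_head // => j j_l'.
by apply: sg; rewrite inE j_l' orbT.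
Qed.

End InnerIndices.

Lemma iota_inner i j : (0 < i)%N -> (j <= n)%N -> all (fun k => 0 < k < n)%N (iota i (j - i)).
Proof. by move=> i_gt0 j_le; apply/allP => k; rewrite mem_iota; lia. Qed.

Definition Tinv_omega i j : op n :=
  opprod (map (@Tinv n) (iota i (j - i)) ++ @omega n :: map (@Tinv n) (iota 1 i.-1)).

Lemma iota1_rcons i : (0 < i)%N -> iota 1 i = rcons (iota 1 i.-1) i.
Proof. by case: i => // i _; rewrite iota_rcons. Qed.

Lemma Y_rec i g : (0 < i < n)%N -> Y i g = sc n tt^-1 * T i (Y i.+1 (T i g)).
Proof.
move=> i_in; rewrite /Y; have -> : (n - i = (n - i.+1).+1)%N by lia.
rewrite /= (iota1_rcons i); last by lia.
rewrite map_rcons -cats1 -[in RHS]cat_cons [in RHS]catA opprod_cat opprod_seq1 TK //.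
by rewrite opprod_cons T_mul_sfixed ?s_sc // mulrA -rmorphM exprS invfM.
Qed.

Lemma Tinv_omega_rec i g : (0 < i < n)%N ->
  Tinv_omega i n g = Tinv i (Tinv_omega i.+1 n (T i g)).
Proof.
move=> i_in; rewrite /Tinv_omega; have -> : (n - i = (n - i.+1).+1)%N by lia.
rewrite /= (iota1_rcons i); last by lia.
by rewrite map_rcons -cats1 -[in RHS]cat_cons [in RHS]catA opprod_cat opprod_seq1 TK.
Qed.

Lemma Tij_invE i j h : Tij_inv i j h =
  opprod (map (@Tinv n) (iota i (j.-1 - i)))
    (Tinv j.-1 (opprod (rev (map (@Tinv n) (iota i (j.-1 - i)))) h)).
Proof. by rewrite /Tij_inv opprod_cat opprod_cons. Qed.

Lemma Tij_inv_succ i h : Tij_inv i i.+1 h = Tinv i h.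
Proof. by rewrite Tij_invE subnn. Qed.

Lemma Tij_inv_rec i j h : (i.+1 < j)%N ->
  Tij_inv i j h = Tinv i (Tij_inv i.+1 j (Tinv i h)).
Proof.
move=> ij; rewrite !Tij_invE; have -> : (j.-1 - i = (j.-1 - i.+1).+1)%N by lia.
by rewrite /= rev_cons -cats1 opprod_cat opprod_seq1 opprod_cons.
Qed.

Lemma Tij_inv_sc i j a h : (0 < i)%N -> (i < j <= n)%N ->
  Tij_inv i j (sc n a * h) = sc n a * Tij_inv i j h.
Proof.
move=> i_gt0 j_in.
have A_in : all (fun k => 0 < k < n)%N (iota i (j.-1 - i)) by apply: iota_inner; lia.
rewrite !Tij_invE -map_rev Tinvs_sc ?all_rev // Tinv_mul_sfixed ?s_sc ?Tinvs_sc //; lia.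
Qed.

Lemma iota_rcons_last i : (i < n)%N -> iota i (n - i) = rcons (iota i (n.-1 - i)) n.-1.
Proof.
move=> i_lt; have -> : (n - i = (n.-1 - i).+1)%N by lia.
by rewrite iota_rcons; congr rcons; lia.
Qed.

Lemma Y_Tij_inv_sum i g : (0 < i <= n)%N ->
  Y i g + sc n (tt^-1 - 1) *
    \sum_(i.+1 <= j < n.+1) sc n (tt ^+ (j - i)) * Tij_inv i j (Y i g)
  = Tinv_omega i n g.
Proof.
move=> i_in; move Em : (n - i)%N => m.
elim: m i i_in Em g => [|m IH] i i_in Em g.
  have -> : i = n by lia.
  by rewrite /Y /Tinv_omega subnn expr0 invr1 rmorph1 mul1r big_geq // mulr0 addr0.
have i_lt : (0 < i < n)%N by lia.
move Ez : (Y i.+1 (T i g)) => z.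
have Yz : Y i g = sc n tt^-1 * T i z by rewrite Y_rec // Ez.
have TinvY : Tinv i (Y i g) = sc n tt^-1 * z by rewrite Yz Tinv_mul_sfixed ?s_sc // TK.
have IHz := IH i.+1 ltac:(lia) ltac:(lia) (T i g); rewrite Ez in IHz.
rewrite Tinv_omega_rec // -IHz TinvD // Tinv_mul_sfixed ?s_sc //.
rewrite [in RHS](big_morph _ (TinvD _ i_lt) (Tinv0 _ i_lt)) [in LHS]big_ltn; last by lia.
rewrite Tij_inv_succ TinvY subSnn expr1.
have -> : \sum_(i.+2 <= j < n.+1) sc n (tt ^+ (j - i)) * Tij_inv i j (Y i g)
    = \sum_(i.+2 <= j < n.+1) Tinv i (sc n (tt ^+ (j - i.+1)) * Tij_inv i.+1 j z).
  apply: eq_big_nat => j j_in; rewrite Tij_inv_rec; last by lia.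
  rewrite TinvY Tij_inv_sc; [|lia|lia].
  rewrite !Tinv_mul_sfixed ?s_sc // mulrA -rmorphM; congr (sc n _ * _).
  have -> : (j - i = (j - i.+1).+1)%N by lia.
  by rewrite exprSr mulfK ?tt_neq0.
have -> : sc n tt * (sc n tt^-1 * z) = z.
  by rewrite mulrA -rmorphM mulfV ?tt_neq0 // rmorph1 mul1r.
rewrite Yz [Tinv i z]/Tinv.
by move: (T i z) (\sum_(_ <= _ < _) _) => Tz S; ring.
Qed.

Lemma Tij_inv_Y i g : (0 < i < n)%N ->
  Tij_inv i n (Y i g) = sc n (tt ^- (n - i)) * Tinv_omega i n.-1 g.
Proof.
move=> i_in.
have A_in : all (fun k => 0 < k < n)%N (iota i (n.-1 - i)) by apply: iota_inner; lia.
rewrite /Y Tij_inv_sc; [congr (_ * _) | lia | lia].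
rewrite iota_rcons_last; last by lia.
rewrite map_rcons -cats1 -catA cat1s opprod_cat opprod_cons Tij_invE Ts_cancel // TK; last by lia.
by rewrite /Tinv_omega opprod_cat.
Qed.

Lemma D_Tinv_omega i f : (0 < i <= n)%N ->
  D i f = (X n i)^-1 * (f - sc n (tt ^+ n.-1) * Tinv_omega i n f).
Proof. by move=> i_in; rewrite /D Y_Tij_inv_sum. Qed.

Section Omega.
Hypothesis n_ge2 : (2 <= n)%N.

Lemma omegaE f : omega f = s n.-1 (opprod (map (@s n) (rev (iota 1 n.-2))) (tau 1 f)).
Proof.
rewrite /omega (_ : n.-1 = n.-2.+1); last by lia.
by rewrite iota_rcons map_rcons rev_rcons cat_cons opprod_cons opprod_cat opprod_seq1 map_rev.
Qed.

Let rev_iota_inner : all (fun k => 0 < k < n)%N (rev (iota 1 n.-2)).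
Proof. by apply/allP => k; rewrite mem_rev mem_iota; lia. Qed.

Lemma omegaM : {morph @omega n : f g / f * g}.
Proof. by move=> f g; rewrite !omegaE tauM s_word_M // sM //; lia. Qed.

Lemma s_Xn_inv k : (0 < k)%N -> (k.+1 < n)%N -> s k (X n n)^-1 = (X n n)^-1.
Proof. by move=> k_gt0 Sk_lt; rewrite sV ?s_Xn //; lia. Qed.

Lemma omega_Xn_inv : omega (X n n)^-1 = (X n n.-1)^-1.
Proof.
rewrite omegaE tauV tau_X; last by lia.
rewrite s_word_fixed //; last by move=> k; rewrite mem_rev mem_iota => k_in; apply: s_Xn_inv; lia.
have -> : X n n = X n n.-1.+1 by rewrite prednK //; lia.
by rewrite sV ?s_XSk //; lia.
Qed.

Lemma Tinv_omega_Xn_inv i g : (0 < i < n)%N ->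
  Tinv_omega i n ((X n n)^-1 * g) - (X n n)^-1 * Tinv_omega i n g
    = sc n (1 - tt^-1) * (X n n)^-1 * Tinv_omega i n.-1 g.
Proof.
move=> i_in.
have A_in : all (fun k => 0 < k < n)%N (iota i (n.-1 - i)) by apply: iota_inner; lia.
have Q_in : all (fun k => 0 < k < n)%N (iota 1 i.-1).
  by apply/allP => k; rewrite mem_iota; lia.
have Xn_fixed l : {subset l <= iota 1 n.-2} -> {in l, forall k, s k (X n n)^-1 = (X n n)^-1}.
  by move=> l_sub k /l_sub; rewrite mem_iota => k_in; apply: s_Xn_inv; lia.
rewrite /Tinv_omega iota_rcons_last; last by lia.
rewrite map_rcons -cats1 -catA cat1s !opprod_cat !opprod_cons.
rewrite (Tinvs_mul_sfixed _ Q_in) ?omegaM ?omega_Xn_inv; last first.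
  by apply: Xn_fixed => k; rewrite !mem_iota; lia.
move Ev : (omega _) => v; rewrite Tinv_Xinv; last by lia.
rewrite prednK; last by lia.
rewrite [sc n _ * _]mulrC -[in LHS]mulrA (Tinvs_mul_sfixed _ A_in); last first.
  by apply: Xn_fixed => k; rewrite !mem_iota; lia.
rewrite [Tinv n.-1 v]/Tinv TinvsD // !Tinvs_sc //.
by move: (opprod _ (T n.-1 v)) (opprod _ v) => ATv Av; ring.
Qed.

End Omega.

End Words.

Lemma tt_exponent_identity n i : (0 < i < n)%N ->
  tt ^+ (2 * n - i - 1) * (tt^-1 - 1) * tt ^- (n - i) = - (tt ^+ n.-1 * (1 - tt^-1)).
Proof.
move=> i_in; rewrite (_ : 2 * n - i - 1 = n.-1 + (n - i))%N; last by lia.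
by rewrite exprD mulrAC mulfK ?expf_neq0 ?tt_neq0 // -mulrN opprB.
Qed.

Theorem lemma3p4 (n : nat) (hn : (2 <= n)%N) (i : nat) (hi : (1 <= i < n)%N)
  (f : L n) (hf : laurent f) :
  D i ((X n n)^-1 * f) - (X n n)^-1 * D i f =
  sc n (tt ^+ (2 * n - i - 1) * (tt^-1 - 1)) * (X n i)^-1 * (X n n)^-1
    * Tij_inv i n (Y i f).
Proof.
have i_le : (0 < i <= n)%N by lia.
have Wx : Tinv_omega i n ((X n n)^-1 * f)
    = (X n n)^-1 * Tinv_omega i n f + sc n (1 - tt^-1) * (X n n)^-1 * Tinv_omega i n.-1 f.
  by rewrite -Tinv_omega_Xn_inv // addrC subrK.
have scE : sc n (tt ^+ (2 * n - i - 1) * (tt^-1 - 1)) * sc n (tt ^- (n - i))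
    = - (sc n (tt ^+ n.-1) * sc n (1 - tt^-1)).
  by rewrite -rmorphM tt_exponent_identity // rmorphN rmorphM.
rewrite !D_Tinv_omega // Tij_inv_Y // Wx.
move: (Tinv_omega i n f) (Tinv_omega i n.-1 f) scE.
move: (sc n (tt ^+ _ * _)) (sc n (tt ^- _)) (sc n (tt ^+ n.-1)) (sc n (1 - tt^-1)).
move=> a b c d W W' abcd.
rewrite (_ : a * _ * _ * (b * W') = a * b * ((X n i)^-1 * (X n n)^-1 * W')); last by ring.
by rewrite abcd; ring.
Qed.
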